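(* For $d\in(0,2]$ let $M(4,d)$ be the cardinality of the four-dimensional spherical code by Hopf foliations (SCHF) with minimum distance $d$, as defined in the context. Then the asymptotic center density of this family, $$\overline{\Delta}_c(\mathrm{SCHF}[4])=\lim_{d\to0}\frac{M(4,d)}{\mathbb{S}_4}\left(\frac d2\right)^{3},$$ equals $\dfrac{1}{4\sqrt3}$.
   Context: $\mathbb{S}_n=\frac{n\pi^{n/2}}{\Gamma(1+n/2)}$ is the surface area of the unit sphere $S^{n-1}\subset\mathbb{R}^n$ (so $\mathbb{S}_4=2\pi^2$). Four-dimensional SCHF: given $d\in(0,2]$, put $\Delta\eta=2\arcsin(d/2)$, $t=t(d)=\lfloor\pi/(4\arcsin(d/2))\rfloor$ and $\eta_i=\pi/4+i\Delta\eta$ for $i=0,1,\dots,\lfloor t/2\rfloor$. For $\eta\in(0,\pi/2]$ let $m(d,\eta)=\lfloor\pi/\arcsin(d/(2\cos\eta))\rfloor$ if $d\le2\cos\eta$ and $1$ otherwise; let $n(d,\eta)=\max(2\lfloor\min\{n_1,n_2\}/2\rfloor,1)$ with $n_1=\lfloor\pi/\arcsin[((d^2/4)\csc^2\eta-\cot^2\eta\sin^2(\pi/2m))^{1/2}]\rfloor$ (where $m=m(d,\eta)$), and $n_2=\lfloor2\pi/\arcsin(d/(2\sin\eta))\rfloor$ if $d\le 2\sin\eta$, $n_2=1$ otherwise. On the torus $T_{\eta_i}=S^1_{\cos\eta_i}\times S^1_{\sin\eta_i}\subset S^3$ the code consists of the $m_in_i$ points $(e^{\mathbf{i}(2\pi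 j/m_i+\pi k/m_i)}\cos\eta_i,\ e^{\mathbf{i}2\pi k/n_i}\sin\eta_i)\in\mathbb{C}^2\cong\mathbb{R}^4$, $0\le j<m_i$, $0\le k<n_i$, where $m_i=m(d,\eta_i)$, $n_i=n(d,\eta_i)$; the tori $\eta=\pi/4-i\Delta\eta$, $i\ge1$, carry the points obtained by swapping the two complex coordinates. Thus $M(4,d)=m_0n_0+2\sum_{i=1}^{\lfloor t/2\rfloor}m_in_i$. *)

From Stdlib Require Import Reals Lra Lia ZArith Arith List.
From Coquelicot Require Import Coquelicot.
Open Scope R_scope.

(* floor of a real, as a natural number (all arguments used below are >= 0) *)
Definition floorN (x : R) : nat := Z.to_nat (Int_part x).

Definition m_fn (d eta : R) : nat :=
  if Rle_dec d (2 * cos eta) then floorN (PI / asin (d / (2 * cos eta))) else 1%nat.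

(* n_1(d, eta), with m = m(d, eta); csc^2 = 1/sin^2, cot^2 = cos^2/sin^2 *)
Definition n1_fn (d eta : R) : nat :=
  floorN (PI / asin (sqrt ((d ^ 2 / 4) / (sin eta) ^ 2
            - ((cos eta) ^ 2 / (sin eta) ^ 2) * (sin (PI / (2 * INR (m_fn d eta)))) ^ 2))).

Definition n2_fn (d eta : R) : nat :=
  if Rle_dec d (2 * sin eta) then floorN (2 * PI / asin (d / (2 * sin eta))) else 1%nat.

Definition n_fn (d eta : R) : nat :=
  Nat.max (2 * (Nat.min (n1_fn d eta) (n2_fn d eta) / 2)) 1.

Definition delta_eta (d : R) : R := 2 * asin (d / 2).
Definition t_fn (d : R) : nat := floorN (PI / (4 * asin (d / 2))).
Definition eta_i (d : R) (i : nat) : R := PI / 4 + INR i * delta_eta d.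

(* number of points on the torus T_{eta_i} *)
Definition pts (d : R) (i : nat) : nat := (m_fn d (eta_i d i) * n_fn d (eta_i d i))%nat.

Definition M4 (d : R) : nat :=
  (pts d 0 + 2 * fold_right Nat.add 0%nat (map (pts d) (seq 1 (t_fn d / 2))))%nat.

(* surface area of S^3 in R^4 *)
Definition S4 : R := 2 * PI ^ 2.

(* On the torus T_eta the m points of a row are about d apart, so m ~ 2 PI cos eta / d, and
   consecutive rows are shifted by half a step.  The nearest-neighbour condition
   (2 cos eta sin (PI / 2m))^2 + (2 sin eta sin (PI / n))^2 = d^2 defining n_1 then forces the
   rows to be sqrt 3 d / 2 apart, so n ~ 4 PI sin eta / (sqrt 3 d): the points form an almost
   hexagonal lattice and m n d^2 = (8 PI^2 / sqrt 3) sin eta cos eta + O(d), uniformly for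
   eta in [PI/4, PI/2].  The tori eta_i = PI/4 + i Delta sample [PI/4, PI/2] with step
   Delta ~ d, and the resulting sum of cos (2 i Delta) telescopes after multiplication by
   2 sin Delta.  Hence M(4,d) d^3 = 4 PI^2 / sqrt 3 + O(d), and dividing by 8 S_4 = 16 PI^2
   gives the density 1 / (4 sqrt 3) with an error of at most 10 d. *)

From Stdlib Require Import Reals.
From Coquelicot Require Import Coquelicot.
From Stdlib Require Import Lra Lia ZArith List.
Open Scope R_scope.

Lemma sin_ge_cubic a : 0 <= a <= PI -> a - a ^ 3 / 6 <= sin a.
Proof.
  intros Ha. destruct (sin_bound a 0 (proj1 Ha) (proj2 Ha)) as [H _].
  unfold sin_approx, sin_term in H. simpl in H. lra.
Qed.

Lemma sin_le_id a : 0 <= a -> sin a <= a.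
Proof.
  intros Ha. destruct (Req_dec a 0) as [->|Ha0].
  - rewrite sin_0. lra.
  - apply Rlt_le, sin_lt_x. lra.
Qed.

Lemma cos_ge_quadratic a : - PI / 2 <= a <= PI / 2 -> 1 - a ^ 2 / 2 <= cos a.
Proof.
  intros Ha. destruct (cos_bound a 0 (proj1 Ha) (proj2 Ha)) as [H _].
  unfold cos_approx, cos_term in H. simpl in H. lra.
Qed.

Lemma asin_ge_id x : 0 <= x <= 1 -> x <= asin x.
Proof.
  intros Hx. pose proof (asin_bound x) as Hb.
  assert (Hs : sin (asin x) = x) by (apply sin_asin; lra).
  destruct (Rlt_or_le (asin x) 0) as [Hn|Hp].
  - pose proof PI_RGT_0.
    assert (sin (asin x) < 0) by (apply sin_lt_0_var; lra). lra.
  - rewrite <- Hs at 1. now apply sin_le_id.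
Qed.

Lemma asin_le_cubic x : 0 <= x <= 1 / 2 -> asin x <= x * (1 + x ^ 2).
Proof.
  intros Hx. pose proof (asin_ge_id x ltac:(lra)) as Hge.
  pose proof (asin_bound x) as Hb. pose proof PI_4. pose proof PI_RGT_0.
  assert (Hs : sin (asin x) = x) by (apply sin_asin; lra).
  set (a := asin x) in *.
  assert (Ha6 : a <= PI / 6).
  { destruct (Rle_or_lt a (PI / 6)) as [Hle|Hgt]; [exact Hle|].
    assert (Hlt : sin (PI / 6) < sin a) by (apply sin_increasing_1; lra).
    rewrite sin_PI6 in Hlt. lra. }
  assert (Hcubic : a * (1 - a ^ 2 / 6) <= x).
  { rewrite <- Hs. pose proof (sin_ge_cubic a ltac:(lra)). simpl in *. lra. }
  assert (Ha : a <= 27 / 25 * x) by (simpl in *; nra).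
  assert (Ha2 : a ^ 2 <= 6 / 5 * x ^ 2) by (simpl in *; nra).
  assert (Hx2 : 0 <= x ^ 2 <= 1 / 4) by (simpl; nra).
  assert (Hfac : 1 <= (1 + x ^ 2) * (1 - x ^ 2 / 5)) by nra.
  assert (Hlow : a * (1 - x ^ 2 / 5) <= x) by (simpl in *; nra).
  assert (Hpos : 0 < 1 - x ^ 2 / 5) by (simpl; nra).
  apply (Rmult_le_reg_r _ _ _ Hpos). nra.
Qed.

Lemma floorN_spec y : 0 <= y -> INR (floorN y) <= y < INR (floorN y) + 1.
Proof.
  intros Hy. unfold floorN. destruct (base_Int_part y) as [Hle Hgt].
  assert (Hnn : (0 <= Int_part y)%Z).
  { apply Z.lt_succ_r, lt_IZR. rewrite succ_IZR. lra. }
  rewrite INR_IZR_INZ, Z2Nat.id by exact Hnn. lra.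
Qed.

Lemma floorN_div_asin_le p x : 0 <= p -> 0 < x <= 1 -> INR (floorN (p / asin x)) <= p / x.
Proof.
  intros Hp Hx. pose proof (asin_ge_id x ltac:(lra)) as Ha.
  destruct (floorN_spec (p / asin x)) as [Hfl _]; [apply Rdiv_le_0_compat; lra|].
  apply (Rle_trans _ _ _ Hfl). apply Rmult_le_compat_l; [lra|].
  apply Rinv_le_contravar; lra.
Qed.

Lemma floorN_div_asin_gt p x : 0 <= p -> 0 < x <= 1 / 2 ->
  p / (x * (1 + x ^ 2)) - 1 < INR (floorN (p / asin x)).
Proof.
  intros Hp Hx. pose proof (asin_ge_id x ltac:(lra)) as Hge.
  pose proof (asin_le_cubic x ltac:(lra)) as Hle.
  destruct (floorN_spec (p / asin x)) as [_ Hfl]; [apply Rdiv_le_0_compat; lra|].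
  enough (p / (x * (1 + x ^ 2)) <= p / asin x) by lra.
  apply Rmult_le_compat_l; [lra|]. apply Rinv_le_contravar; lra.
Qed.

Lemma n_fn_le_max_min d e :
  (n_fn d e <= Nat.max (Nat.min (n1_fn d e) (n2_fn d e)) 1)%nat.
Proof.
  unfold n_fn. pose proof (Nat.Div0.mul_div_le (Nat.min (n1_fn d e) (n2_fn d e)) 2). lia.
Qed.

Lemma min_le_n_fn_succ d e : (Nat.min (n1_fn d e) (n2_fn d e) <= n_fn d e + 1)%nat.
Proof.
  unfold n_fn. set (k := Nat.min (n1_fn d e) (n2_fn d e)).
  pose proof (Nat.div_mod k 2). pose proof (Nat.mod_upper_bound k 2). lia.
Qed.

Lemma n_fn_le d e U : 1 <= U -> INR (n1_fn d e) <= U \/ INR (n2_fn d e) <= U ->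
  INR (n_fn d e) <= U.
Proof.
  intros HU Hn. pose proof (le_INR _ _ (n_fn_le_max_min d e)) as Hmax.
  destruct (Nat.max_spec (Nat.min (n1_fn d e) (n2_fn d e)) 1) as [[_ Hm]|[_ Hm]];
    rewrite Hm in Hmax.
  - simpl in Hmax. lra.
  - apply (Rle_trans _ _ _ Hmax).
    destruct Hn; eapply Rle_trans; try eassumption; apply le_INR; lia.
Qed.

Lemma n_fn_ge d e V : V <= INR (n1_fn d e) -> V <= INR (n2_fn d e) -> V - 1 <= INR (n_fn d e).
Proof.
  intros H1 H2. pose proof (le_INR _ _ (min_le_n_fn_succ d e)) as Hmin.
  rewrite plus_INR in Hmin. simpl in Hmin.
  destruct (Nat.min_spec (n1_fn d e) (n2_fn d e)) as [[_ Heq]|[_ Heq]];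
    rewrite Heq in Hmin; lra.
Qed.

Lemma m_fn_eq d e : d <= 2 * cos e -> m_fn d e = floorN (PI / asin (d / (2 * cos e))).
Proof. intros H. unfold m_fn. now destruct (Rle_dec d (2 * cos e)). Qed.

Lemma n2_fn_eq d e : d <= 2 * sin e -> n2_fn d e = floorN (2 * PI / asin (d / (2 * sin e))).
Proof. intros H. unfold n2_fn. now destruct (Rle_dec d (2 * sin e)). Qed.

Lemma sin_cos_bounds e : PI / 6 <= e <= PI / 2 -> 1 / 2 <= sin e <= 1 /\ 0 <= cos e <= 1.
Proof.
  intros He. pose proof PI_RGT_0.
  assert (Hs : sin (PI / 6) <= sin e) by (apply sin_incr_1; lra).
  rewrite sin_PI6 in Hs.
  pose proof (SIN_bound e). pose proof (COS_bound e).
  assert (Hc : 0 <= cos e) by (apply cos_ge_0; lra).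
  repeat split; lra.
Qed.

Lemma m_fn_mul_le d e : 0 < d -> 0 <= cos e -> INR (m_fn d e) * d <= 2 * PI * cos e + d.
Proof.
  intros Hd Hc. pose proof PI_RGT_0. unfold m_fn.
  destruct (Rle_dec d (2 * cos e)) as [Hle|Hgt].
  - assert (Hx : 0 < d / (2 * cos e) <= 1).
    { split; [apply Rdiv_lt_0_compat|apply Rle_div_l]; lra. }
    pose proof (floorN_div_asin_le PI _ ltac:(lra) Hx) as Hm.
    replace (PI / (d / (2 * cos e))) with (2 * PI * cos e / d) in Hm by (field; lra).
    apply Rle_div_r in Hm; lra.
  - simpl. nra.
Qed.

Lemma m_fn_mul_bounds d e : 0 < d -> 4 * d < cos e ->
  2 * PI * cos e - PI * d <= INR (m_fn d e) * d <= 2 * PI * cos e.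
Proof.
  intros Hd Hc. pose proof PI_RGT_0. pose proof PI2_3_2.
  rewrite m_fn_eq by lra.
  set (x := d / (2 * cos e)).
  assert (Hxd : d = 2 * cos e * x) by (unfold x; field; lra).
  assert (Hx : 0 < x <= 1 / 8).
  { split; [apply Rdiv_lt_0_compat|apply Rle_div_l]; lra. }
  pose proof (floorN_div_asin_le PI x ltac:(lra) ltac:(lra)) as Hup.
  pose proof (floorN_div_asin_gt PI x ltac:(lra) ltac:(lra)) as Hlo.
  set (M := INR (floorN (PI / asin x))) in *.
  assert (Hx3 : 0 < x * (1 + x ^ 2)) by (simpl; nra).
  split.
  - assert (HM : PI < (M + 1) * (x * (1 + x ^ 2))) by (apply Rlt_div_l; lra).
    assert (Hsmall : PI * (1 - x) * (1 + x ^ 2) <= PI - x * (1 + x ^ 2)).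
    { assert (0 <= x * (PI * (1 - x) - 1)) by (apply Rmult_le_pos; nra).
      assert (0 <= (PI - 1) * x ^ 3) by (apply Rmult_le_pos; [lra|apply pow_le; lra]).
      simpl in *. nra. }
    assert (Hx2 : 0 < 1 + x ^ 2) by (simpl; nra).
    assert (HMx : PI * (1 - x) <= x * M).
    { apply (Rmult_le_reg_r (1 + x ^ 2)); [lra|]. nra. }
    rewrite Hxd. nra.
  - apply Rle_div_r in Hup; [|lra]. rewrite Hxd. nra.
Qed.

Lemma sin_half_turn_div_floor x : 0 < x <= 1 / 8 ->
  let M := INR (floorN (PI / asin x)) in
  x / 2 * (1 - x ^ 2 / 24) <= sin (PI / (2 * M)) <= x / 2 * (1 + 2 * x).
Proof.
  intros Hx M. pose proof PI2_3_2. pose proof PI_4.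
  pose proof (asin_ge_id x ltac:(lra)) as Hge.
  pose proof (asin_le_cubic x ltac:(lra)) as Hle.
  set (a := asin x) in *.
  destruct (floorN_spec (PI / a)) as [Hfl Hfg]; [apply Rdiv_le_0_compat; lra|].
  fold M in Hfl, Hfg.
  assert (HMa : M * a <= PI) by (apply Rle_div_r; lra).
  assert (HMa' : PI < (M + 1) * a) by (apply Rlt_div_l; lra).
  assert (Hx2 : x ^ 2 <= x / 8) by (simpl; nra).
  assert (Ha : 0 < a <= 13 / 100) by (simpl in *; nra).
  assert (HM : 11 <= M) by nra.
  set (th := PI / (2 * M)).
  assert (Hth : th * (2 * M) = PI) by (unfold th; field; lra).
  assert (Hth0 : 0 < th) by (unfold th; apply Rdiv_lt_0_compat; lra).
  split.
  - assert (Hth1 : x / 2 <= th <= 1 / 5) by nra.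
    pose proof (sin_ge_cubic th ltac:(lra)) as Hs.
    assert (Hmono : 0 <= (th - x / 2) * (1 - (th ^ 2 + th * (x / 2) + (x / 2) ^ 2) / 6)).
    { apply Rmult_le_pos; simpl; nra. }
    simpl in *. nra.
  - (* PI < (M + 1) a means th < PI a / (2 (PI - a)) *)
    assert (Hthup : th * (2 * (PI - a)) <= PI * a) by nra.
    assert (Hfin : PI * (x * (1 + x ^ 2)) <= x * (1 + 2 * x) * (PI - x * (1 + x ^ 2))).
    { simpl in *. nra. }
    pose proof (sin_le_id th ltac:(lra)). nra.
Qed.

Definition n1_radius (d eta : R) : R :=
  sqrt ((d ^ 2 / 4) / (sin eta) ^ 2
        - ((cos eta) ^ 2 / (sin eta) ^ 2) * (sin (PI / (2 * INR (m_fn d eta)))) ^ 2).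

Lemma n1_fn_radius d e : n1_fn d e = floorN (PI / asin (n1_radius d e)).
Proof. reflexivity. Qed.

Lemma n1_radius_eq d e : 0 < d -> 0 < sin e ->
  n1_radius d e =
  d / (4 * sin e) * sqrt (4 - (4 * cos e * sin (PI / (2 * INR (m_fn d e))) / d) ^ 2).
Proof.
  intros Hd Hs. unfold n1_radius.
  set (w := sin (PI / (2 * INR (m_fn d e)))).
  replace ((d ^ 2 / 4) / sin e ^ 2 - (cos e ^ 2 / sin e ^ 2) * w ^ 2)
    with ((d / (4 * sin e)) ^ 2 * (4 - (4 * cos e * w / d) ^ 2)) by (field; lra).
  rewrite sqrt_mult_alt by (apply pow2_ge_0).
  rewrite sqrt_pow2; [reflexivity|].
  apply Rlt_le, Rdiv_lt_0_compat; lra.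
Qed.

Lemma sqrt3_div_sqrt_bounds rho x : 0 <= x <= 1 / 8 -> 1 - x ^ 2 / 24 <= rho <= 1 + 2 * x ->
  1 <= sqrt (4 - rho ^ 2) <= 2 /\ 1 - x <= sqrt 3 / sqrt (4 - rho ^ 2) <= 1 + 3 * x.
Proof.
  intros Hx Hrho.
  assert (Hv2 : 3 - 5 * x <= 4 - rho ^ 2 <= 3 + x ^ 2 / 12).
  { assert (Hlo : 0 <= 1 - x ^ 2 / 24) by (simpl; nra).
    assert (rho * rho <= (1 + 2 * x) * (1 + 2 * x)) by (apply Rmult_le_compat; lra).
    assert ((1 - x ^ 2 / 24) * (1 - x ^ 2 / 24) <= rho * rho) by (apply Rmult_le_compat; lra).
    simpl in *. nra. }
  set (v := sqrt (4 - rho ^ 2)).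
  assert (Hv : v * v = 4 - rho ^ 2) by (apply sqrt_sqrt; lra).
  pose proof (sqrt_pos (4 - rho ^ 2)) as Hv0. fold v in Hv0.
  pose proof (sqrt_sqrt 3 ltac:(lra)) as Hr. pose proof (sqrt_pos 3) as Hr0.
  assert (Hv1 : 1 <= v <= 2) by nra.
  split; [exact Hv1|]. split.
  - apply Rle_div_r; [lra|]. apply Rsqr_incr_0_var; [|lra]. unfold Rsqr.
    assert (Hsq : (1 - x) * (1 - x) * (3 + x ^ 2 / 12) <= 3) by (simpl in *; nra).
    assert (Hsq' : (1 - x) * (1 - x) * (v * v) <= (1 - x) * (1 - x) * (3 + x ^ 2 / 12))
      by (apply Rmult_le_compat_l; nra).
    nra.
  - apply Rle_div_l; [lra|]. apply Rsqr_incr_0_var; [|nra]. unfold Rsqr.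
    assert (Hsq : 3 <= (3 - 5 * x) * ((1 + 3 * x) * (1 + 3 * x))) by (simpl in *; nra).
    assert (Hsq' : (3 - 5 * x) * ((1 + 3 * x) * (1 + 3 * x)) <= (v * v) * ((1 + 3 * x) * (1 + 3 * x)))
      by (apply Rmult_le_compat_r; nra).
    nra.
Qed.

Lemma n_fn_mul_bounds d e v : 0 < d <= 1 / 100 -> 1 / 2 <= sin e -> 1 <= v <= 2 ->
  n1_radius d e = d * v / (4 * sin e) ->
  4 * PI * sin e / (v * (1 + d ^ 2)) - 2 * d <= INR (n_fn d e) * d <= 4 * PI * sin e / v.
Proof.
  intros Hd Hs Hv Hrad. pose proof PI2_3_2.
  set (y := d * v / (4 * sin e)). set (z := d / (2 * sin e)).
  assert (Hy : 0 < y <= d).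
  { split; [apply Rdiv_lt_0_compat; nra|apply Rle_div_l; nra]. }
  assert (Hz : 0 < z <= d).
  { split; [apply Rdiv_lt_0_compat|apply Rle_div_l]; nra. }
  assert (Hn1 : n1_fn d e = floorN (PI / asin y)) by (rewrite n1_fn_radius, Hrad; reflexivity).
  assert (Hn2 : n2_fn d e = floorN (2 * PI / asin z)) by (apply n2_fn_eq; lra).
  assert (Hd2 : 0 < 1 + d ^ 2) by (simpl; nra).
  split.
  - set (V := 4 * PI * sin e / (d * v * (1 + d ^ 2))).
    assert (HV1 : V - 1 <= INR (n1_fn d e)).
    { rewrite Hn1. pose proof (floorN_div_asin_gt PI y ltac:(lra) ltac:(lra)) as Hlo.
      enough (V <= PI / (y * (1 + y ^ 2))) by lra.
      replace V with (PI / (y * (1 + d ^ 2))) by (unfold V, y; field; nra).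
      apply Rmult_le_compat_l; [lra|]. apply Rinv_le_contravar; [simpl; nra|].
      apply Rmult_le_compat_l; [lra|]. simpl; nra. }
    assert (HV2 : V - 1 <= INR (n2_fn d e)).
    { rewrite Hn2. pose proof (floorN_div_asin_gt (2 * PI) z ltac:(lra) ltac:(lra)) as Hlo.
      enough (V <= 2 * PI / (z * (1 + z ^ 2))) by lra.
      replace (2 * PI / (z * (1 + z ^ 2))) with (V * (v * (1 + d ^ 2) / (1 + z ^ 2)))
        by (unfold V, z; field; simpl; nra).
      assert (HV0 : 0 <= V).
      { apply Rdiv_le_0_compat; [nra|]. apply Rmult_lt_0_compat; nra. }
      rewrite <- (Rmult_1_r V) at 1. apply Rmult_le_compat_l; [exact HV0|].
      apply Rle_div_r; [simpl; nra|]. simpl; nra. }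
    pose proof (n_fn_ge d e (V - 1) HV1 HV2) as Hn.
    unfold V in Hn.
    replace (4 * PI * sin e / (v * (1 + d ^ 2)) - 2 * d)
      with ((4 * PI * sin e / (d * v * (1 + d ^ 2)) - 1 - 1) * d) by (field; nra).
    apply Rmult_le_compat_r; lra.
  - assert (Hn : INR (n_fn d e) <= PI / y).
    { apply n_fn_le.
      - apply Rle_div_r; lra.
      - left. rewrite Hn1. apply floorN_div_asin_le; lra. }
    replace (4 * PI * sin e / v) with (PI / y * d) by (unfold y; field; nra).
    apply Rmult_le_compat_r; lra.
Qed.

Lemma Rabs_mul_sub_mul_le P Q x delta m n :
  0 <= P -> 0 <= Q -> 0 <= x <= 1 -> 0 <= delta ->
  P * (1 - x) <= m <= P -> 0 <= n -> Q * (1 - x) - delta <= n <= Q * (1 + 3 * x) ->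
  Rabs (m * n - P * Q) <= 3 * (P * Q * x) + P * delta.
Proof.
  intros HP HQ Hx Hdelta Hm Hn0 Hn. apply Rabs_le. split.
  - assert (Hlo : P * (1 - x) * (Q * (1 - x) - delta) <= m * n).
    { apply (Rle_trans _ (P * (1 - x) * n)).
      - apply Rmult_le_compat_l; nra.
      - apply Rmult_le_compat_r; lra. }
    assert (0 <= P * Q * (x * x)) by (apply Rmult_le_pos; nra).
    assert (P * (1 - x) * delta <= P * delta) by nra.
    nra.
  - assert (m * n <= P * n) by (apply Rmult_le_compat_r; lra).
    assert (P * n <= P * (Q * (1 + 3 * x))) by (apply Rmult_le_compat_l; lra).
    nra.
Qed.

(* (2 / sqrt 3) * 4 PI^2: the hexagonal density 2 / (sqrt 3 d^2) of a packing with minimum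
   distance d, times the area 4 PI^2 sin eta cos eta of the torus T_eta *)
Definition hex_const : R := 8 * PI ^ 2 / sqrt 3.

Lemma sqrt3_bounds : 17 / 10 < sqrt 3 < 18 / 10.
Proof. pose proof (sqrt_sqrt 3 ltac:(lra)). pose proof (sqrt_pos 3). split; nra. Qed.

Lemma hex_const_bounds : 0 < hex_const <= 76.
Proof.
  unfold hex_const. pose proof sqrt3_bounds as Hr. pose proof PI2_3_2. pose proof PI_4.
  split.
  - apply Rdiv_lt_0_compat; [simpl; nra|lra].
  - apply Rle_div_l; [lra|]. simpl; nra.
Qed.

Lemma n1_radius_far d e : 0 < d -> 0 < sin e -> 4 * d < cos e ->
  let x := d / (2 * cos e) in
  exists v, 1 <= v <= 2 /\ 1 - x <= sqrt 3 / v <= 1 + 3 * x /\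
            n1_radius d e = d * v / (4 * sin e).
Proof.
  intros Hd Hs Hc x.
  assert (Hxd : d = 2 * cos e * x) by (unfold x; field; lra).
  assert (Hx : 0 < x <= 1 / 8).
  { split; [apply Rdiv_lt_0_compat|apply Rle_div_l]; lra. }
  set (w := sin (PI / (2 * INR (m_fn d e)))).
  assert (Hw : x / 2 * (1 - x ^ 2 / 24) <= w <= x / 2 * (1 + 2 * x)).
  { unfold w. rewrite m_fn_eq by lra. exact (sin_half_turn_div_floor x Hx). }
  set (rho := 4 * cos e * w / d).
  assert (Hrho : 1 - x ^ 2 / 24 <= rho <= 1 + 2 * x).
  { replace rho with (2 * w / x) by (unfold rho; rewrite Hxd; field; lra).
    split; [apply Rle_div_r|apply Rle_div_l]; lra. }
  exists (sqrt (4 - rho ^ 2)).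
  destruct (sqrt3_div_sqrt_bounds rho x ltac:(lra) Hrho) as [Hv Hratio].
  repeat split; try lra.
  rewrite n1_radius_eq by lra. unfold rho, w. field. lra.
Qed.

Lemma n_fn_mul_far d e : 0 < d <= 1 / 100 -> PI / 6 <= e <= PI / 2 -> 4 * d < cos e ->
  let x := d / (2 * cos e) in
  let Q := 4 * PI * sin e / sqrt 3 in
  Q * (1 - x) - (2 * Q * d ^ 2 + 2 * d) <= INR (n_fn d e) * d <= Q * (1 + 3 * x).
Proof.
  intros Hd He Hc x Q. pose proof PI2_3_2. pose proof PI_4.
  destruct (sin_cos_bounds e He) as [Hs _].
  pose proof sqrt3_bounds as Hr.
  destruct (n1_radius_far d e ltac:(lra) ltac:(lra) Hc) as (v & Hv & Hratio & Hrad).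
  fold x in Hratio.
  assert (Hx : x <= 1 / 8) by (unfold x; apply Rle_div_l; lra).
  pose proof (n_fn_mul_bounds d e v Hd ltac:(lra) Hv Hrad) as Hn.
  assert (HQv : 4 * PI * sin e / v = Q * (sqrt 3 / v)) by (unfold Q; field; lra).
  assert (HQ : 0 <= Q) by (unfold Q; apply Rdiv_le_0_compat; nra).
  rewrite HQv in Hn. split; [|nra].
  assert (Hd2 : 0 <= d ^ 2 <= 1 / 10000) by (simpl; nra).
  assert (Hdiv : Q * (sqrt 3 / v) * (1 - d ^ 2) <= 4 * PI * sin e / (v * (1 + d ^ 2))).
  { replace (4 * PI * sin e / (v * (1 + d ^ 2))) with (Q * (sqrt 3 / v) * (1 / (1 + d ^ 2)))
      by (rewrite <- HQv; field; split; lra).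
    apply Rmult_le_compat_l; [apply Rmult_le_pos; [lra|apply Rdiv_le_0_compat; lra]|].
    apply Rle_div_r; [lra|]. nra. }
  assert (Q * (1 - x) <= Q * (sqrt 3 / v)) by (apply Rmult_le_compat_l; lra).
  assert (Q * (sqrt 3 / v) * d ^ 2 <= Q * 2 * d ^ 2).
  { apply Rmult_le_compat_r; [lra|]. apply Rmult_le_compat_l; lra. }
  lra.
Qed.

Lemma torus_count_far d e : 0 < d <= 1 / 100 -> PI / 6 <= e <= PI / 2 -> 4 * d < cos e ->
  Rabs (INR (m_fn d e * n_fn d e) * d ^ 2 - hex_const * sin e * cos e) <= 200 * d.
Proof.
  intros Hd He Hc. pose proof PI2_3_2. pose proof PI_4. pose proof hex_const_bounds.
  destruct (sin_cos_bounds e He) as [Hs Hc1].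
  pose proof sqrt3_bounds as Hr.
  pose proof (m_fn_mul_bounds d e ltac:(lra) Hc) as Hm.
  pose proof (n_fn_mul_far d e Hd He Hc) as Hn.
  set (x := d / (2 * cos e)) in *. set (Q := 4 * PI * sin e / sqrt 3) in *.
  set (P := 2 * PI * cos e).
  assert (Hxd : d = 2 * cos e * x) by (unfold x; field; lra).
  assert (Hx : 0 < x <= 1 / 8).
  { split; [apply Rdiv_lt_0_compat|apply Rle_div_l]; lra. }
  assert (HQ : 0 <= Q <= 10).
  { unfold Q. split; [apply Rdiv_le_0_compat|apply Rle_div_l]; nra. }
  assert (HPQ : P * Q = hex_const * sin e * cos e) by (unfold P, Q, hex_const; field; lra).
  rewrite mult_INR, <- HPQ.
  replace (INR (m_fn d e) * INR (n_fn d e) * d ^ 2)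
    with ((INR (m_fn d e) * d) * (INR (n_fn d e) * d)) by ring.
  eapply Rle_trans.
  - apply (Rabs_mul_sub_mul_le P Q x (2 * Q * d ^ 2 + 2 * d)); try lra.
    + unfold P. nra.
    + simpl; nra.
    + unfold P. replace (PI * d) with (2 * PI * cos e * x) in Hm by (rewrite Hxd; ring). lra.
    + apply Rmult_le_pos; [apply pos_INR|lra].
  - assert (HPQx : P * Q * x = hex_const * sin e * d / 2) by (rewrite HPQ, Hxd; field; lra).
    assert (HP : 0 <= P <= 8) by (unfold P; nra).
    assert (hex_const * sin e <= 76) by nra.
    assert (P * Q <= 80) by nra.
    assert (P * Q * (d * d) <= 80 * d) by (apply Rmult_le_compat; nra).
    rewrite HPQx. simpl. nra.
Qed.

Lemma torus_count_near d e : 0 < d <= 1 / 100 -> PI / 6 <= e <= PI / 2 -> cos e <= 4 * d ->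
  Rabs (INR (m_fn d e * n_fn d e) * d ^ 2 - hex_const * sin e * cos e) <= 600 * d.
Proof.
  intros Hd He Hc. pose proof PI2_3_2. pose proof PI_4. pose proof hex_const_bounds.
  destruct (sin_cos_bounds e He) as [Hs Hc1].
  pose proof (m_fn_mul_le d e ltac:(lra) ltac:(lra)) as Hm.
  assert (Hn : INR (n_fn d e) * d <= 4 * PI * sin e).
  { apply Rle_div_r; [lra|]. apply n_fn_le.
    - apply Rle_div_r; nra.
    - right. rewrite n2_fn_eq by lra.
      replace (4 * PI * sin e / d) with (2 * PI / (d / (2 * sin e))) by (field; lra).
      apply floorN_div_asin_le; [lra|].
      split; [apply Rdiv_lt_0_compat|apply Rle_div_l]; lra. }
  pose proof (pos_INR (m_fn d e)). pose proof (pos_INR (n_fn d e)).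
  rewrite mult_INR.
  replace (INR (m_fn d e) * INR (n_fn d e) * d ^ 2)
    with ((INR (m_fn d e) * d) * (INR (n_fn d e) * d)) by ring.
  assert (0 <= (INR (m_fn d e) * d) * (INR (n_fn d e) * d) <= 33 * d * 16).
  { split; [apply Rmult_le_pos; nra|]. apply Rmult_le_compat; nra. }
  assert (0 <= hex_const * sin e * cos e <= 76 * (4 * d)).
  { split; [apply Rmult_le_pos; nra|]. apply Rmult_le_compat; nra. }
  apply Rabs_le. lra.
Qed.

Lemma torus_count_estimate d e : 0 < d <= 1 / 100 -> PI / 6 <= e <= PI / 2 ->
  Rabs (INR (m_fn d e * n_fn d e) * d ^ 2 - hex_const * sin e * cos e) <= 600 * d.
Proof.
  intros Hd He. destruct (Rle_or_lt (cos e) (4 * d)) as [Hc|Hc].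
  - now apply torus_count_near.
  - apply (Rle_trans _ (200 * d)); [now apply torus_count_far|lra].
Qed.

Definition sumR (l : list nat) (f : nat -> R) : R := fold_right Rplus 0 (map f l).

Lemma INR_sum_nat (g : nat -> nat) l :
  INR (fold_right Nat.add 0%nat (map g l)) = sumR l (fun i => INR (g i)).
Proof.
  induction l as [|i l IH]; [reflexivity|]. unfold sumR in *. simpl. now rewrite plus_INR, IH.
Qed.

Lemma sumR_mult_r l f k : sumR l (fun i => f i * k) = sumR l f * k.
Proof. induction l as [|i l IH]; unfold sumR in *; simpl; [ring|]. rewrite IH. ring. Qed.

Lemma sumR_mult_l l f k : sumR l (fun i => k * f i) = k * sumR l f.
Proof. induction l as [|i l IH]; unfold sumR in *; simpl; [ring|]. rewrite IH. ring. Qed.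

Lemma Rabs_sumR_sub_le l f g eps : (forall i, In i l -> Rabs (f i - g i) <= eps) ->
  Rabs (sumR l f - sumR l g) <= INR (length l) * eps.
Proof.
  induction l as [|i l IH]; intros H; unfold sumR in *; cbn [map fold_right length].
  - rewrite Rminus_0_r, Rabs_R0. simpl. lra.
  - replace (f i + fold_right Rplus 0 (map f l) - (g i + fold_right Rplus 0 (map g l)))
      with ((f i - g i) + (fold_right Rplus 0 (map f l) - fold_right Rplus 0 (map g l)))
      by ring.
    eapply Rle_trans; [apply Rabs_triang|].
    assert (Rabs (f i - g i) <= eps) by (apply H; now left).
    assert (Rabs (fold_right Rplus 0 (map f l) - fold_right Rplus 0 (map g l))
              <= INR (length l) * eps) by (apply IH; intros; apply H; now right).
    rewrite S_INR. lra.
Qed.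

Lemma sin_mul_sumR_cos D s n :
  2 * sin D * sumR (seq s n) (fun i => cos (2 * INR i * D)) =
  sin ((2 * INR (s + n) - 1) * D) - sin ((2 * INR s - 1) * D).
Proof.
  revert s. induction n as [|n IH]; intros s; unfold sumR in *; cbn [seq map fold_right].
  - rewrite Nat.add_0_r. ring.
  - rewrite Rmult_plus_distr_l, IH, <- plus_n_Sm. simpl (S s + n)%nat. rewrite !S_INR.
    (* 2 sin D cos (2 s D) = sin ((2 s + 1) D) - sin ((2 s - 1) D) *)
    replace ((2 * (INR s + 1) - 1) * D) with (2 * INR s * D + D) by ring.
    replace ((2 * INR s - 1) * D) with (2 * INR s * D - D) by ring.
    rewrite sin_plus, sin_minus. ring.
Qed.

Lemma t_fn_spec d : 0 < d <= 2 ->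
  INR (t_fn d) * delta_eta d <= PI / 2 < (INR (t_fn d) + 1) * delta_eta d.
Proof.
  intros Hd. pose proof PI_RGT_0.
  pose proof (asin_ge_id (d / 2) ltac:(lra)) as Ha.
  unfold t_fn, delta_eta. set (a := asin (d / 2)) in *.
  destruct (floorN_spec (PI / (4 * a))) as [Hle Hgt]; [apply Rdiv_le_0_compat; lra|].
  apply Rle_div_r in Hle; [|lra]. apply Rlt_div_l in Hgt; [|lra]. lra.
Qed.

Lemma half_t_fn_spec d : 0 < d <= 2 ->
  let K := INR (t_fn d / 2) in
  2 * K * delta_eta d <= PI / 2 /\
  PI / 2 - delta_eta d < (2 * K + 1) * delta_eta d <= PI / 2 + delta_eta d.
Proof.
  intros Hd K.
  pose proof (asin_ge_id (d / 2) ltac:(lra)) as Ha.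
  assert (HD : 0 < delta_eta d) by (unfold delta_eta; lra).
  destruct (t_fn_spec d Hd) as [Hle Hgt].
  assert (HK : 2 * K <= INR (t_fn d) <= 2 * K + 1).
  { assert (Hnat : (2 * (t_fn d / 2) <= t_fn d <= 2 * (t_fn d / 2) + 1)%nat).
    { pose proof (Nat.div_mod (t_fn d) 2). pose proof (Nat.mod_upper_bound (t_fn d) 2). lia. }
    destruct Hnat as [H1 H2]. apply le_INR in H1, H2.
    rewrite mult_INR in H1. rewrite plus_INR, mult_INR in H2.
    change (INR 2) with 2 in H1, H2. change (INR 1) with 1 in H2. unfold K. lra. }
  repeat split; nra.
Qed.

Lemma eta_i_range d i : 0 < d <= 2 -> (i <= t_fn d / 2)%nat -> PI / 4 <= eta_i d i <= PI / 2.
Proof.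
  intros Hd Hi. pose proof (asin_ge_id (d / 2) ltac:(lra)).
  assert (HD : 0 < delta_eta d) by (unfold delta_eta; lra).
  destruct (half_t_fn_spec d Hd) as [HK _].
  apply le_INR in Hi. pose proof (pos_INR i).
  unfold eta_i. split; nra.
Qed.

Lemma pts_estimate d i : 0 < d <= 1 / 100 -> (i <= t_fn d / 2)%nat ->
  Rabs (INR (pts d i) * d ^ 2 - hex_const / 2 * cos (2 * INR i * delta_eta d)) <= 600 * d.
Proof.
  intros Hd Hi. pose proof (eta_i_range d i ltac:(lra) Hi) as He.
  replace (hex_const / 2 * cos (2 * INR i * delta_eta d))
    with (hex_const * sin (eta_i d i) * cos (eta_i d i)).
  - apply torus_count_estimate; [lra|]. pose proof PI_RGT_0. lra.
  - rewrite (cos_sin (2 * INR i * delta_eta d)).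
    replace (PI / 2 + 2 * INR i * delta_eta d) with (2 * eta_i d i)
      by (unfold eta_i; field).
    rewrite sin_2a. field.
Qed.

Lemma sumR_cos_estimate d K : 0 < d <= 1 / 100 ->
  PI / 2 - delta_eta d < (2 * INR K + 1) * delta_eta d <= PI / 2 + delta_eta d ->
  Rabs (2 * d * sumR (seq 1 K) (fun i => cos (2 * INR i * delta_eta d)) - 1) <= 4 * d.
Proof.
  intros Hd HK. pose proof PI2_3_2.
  pose proof (asin_ge_id (d / 2) ltac:(lra)) as Hage.
  pose proof (asin_le_cubic (d / 2) ltac:(lra)) as Hale.
  set (a := asin (d / 2)) in *.
  assert (Ha : a <= 51 / 100 * d) by (simpl in *; nra).
  set (D := delta_eta d) in *.
  assert (HD : D = 2 * a) by reflexivity.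
  set (S := sumR (seq 1 K) (fun i => cos (2 * INR i * D))).
  assert (HsD : sin D = d * cos a).
  { rewrite HD, sin_2a. unfold a. rewrite sin_asin by lra. field. }
  assert (Hca : 1 - a ^ 2 / 2 <= cos a <= 1).
  { split; [apply cos_ge_quadratic; lra|]. apply COS_bound. }
  assert (Ha2 : a ^ 2 <= d) by (simpl; nra).
  assert (Htel : 2 * d * S * cos a = sin ((2 * INR K + 1) * D) - sin D).
  { transitivity (2 * sin D * S); [rewrite HsD; ring|].
    unfold S. rewrite sin_mul_sumR_cos, plus_INR. simpl (INR 1). f_equal; f_equal; ring. }
  set (th := (2 * INR K + 1) * D) in *.
  assert (Hth : 1 - D ^ 2 / 2 <= sin th <= 1).
  { split; [|apply SIN_bound].
    replace (sin th) with (cos (th - PI / 2)) by (rewrite cos_sin; f_equal; ring).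
    assert (1 - (th - PI / 2) ^ 2 / 2 <= cos (th - PI / 2)) by (apply cos_ge_quadratic; lra).
    assert ((th - PI / 2) ^ 2 <= D ^ 2) by (simpl; nra). lra. }
  assert (HsD1 : 0 <= sin D <= D).
  { rewrite HsD. split; [nra|]. rewrite <- HsD. apply sin_le_id. lra. }
  assert (Herr : Rabs ((2 * d * S - 1) * cos a) <= 2 * d).
  { replace ((2 * d * S - 1) * cos a) with (sin th - sin D - cos a) by lra.
    assert (HD0 : 0 < D <= 102 / 100 * d) by lra.
    assert (HD2 : D ^ 2 <= d / 50) by (simpl; nra).
    apply Rabs_le. lra. }
  assert (Hca2 : 1 / 2 <= cos a) by lra.
  rewrite Rabs_mult, (Rabs_pos_eq (cos a)) in Herr by lra.
  pose proof (Rabs_pos (2 * d * S - 1)). nra.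
Qed.

Lemma M4_estimate d : 0 < d <= 1 / 100 -> Rabs (INR (M4 d) * d ^ 3 - hex_const / 2) <= 1400 * d.
Proof.
  intros Hd. pose proof PI_4. pose proof hex_const_bounds.
  pose proof (asin_ge_id (d / 2) ltac:(lra)) as Ha.
  destruct (half_t_fn_spec d ltac:(lra)) as [HK Hth].
  set (K := (t_fn d / 2)%nat) in *.
  assert (HKd : INR K * d <= 1).
  { pose proof (pos_INR K). unfold delta_eta in HK. nra. }
  set (P0 := INR (pts d 0)).
  set (S := sumR (seq 1 K) (fun i => INR (pts d i))).
  set (C := sumR (seq 1 K) (fun i => cos (2 * INR i * delta_eta d))).
  assert (HM : INR (M4 d) = P0 + 2 * S).
  { unfold M4. rewrite plus_INR, mult_INR, INR_sum_nat. reflexivity. }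
  assert (HP0 : Rabs (P0 * d ^ 2 - hex_const / 2) <= 600 * d).
  { pose proof (pts_estimate d 0 Hd ltac:(lia)) as Hi0.
    rewrite Rmult_0_r, Rmult_0_l, cos_0, Rmult_1_r in Hi0. exact Hi0. }
  assert (HS : Rabs (S * d ^ 2 - hex_const / 2 * C) <= INR K * (600 * d)).
  { unfold S, C. rewrite <- sumR_mult_r, <- sumR_mult_l.
    replace (INR K) with (INR (length (seq 1 K))) by now rewrite length_seq.
    apply Rabs_sumR_sub_le. intros i Hi. apply in_seq in Hi.
    apply pts_estimate; [lra|lia]. }
  pose proof (sumR_cos_estimate d K Hd Hth) as HC. fold C in HC.
  replace (INR (M4 d) * d ^ 3 - hex_const / 2)
    with (d * (P0 * d ^ 2 - hex_const / 2) + d * (hex_const / 2)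
          + 2 * d * (S * d ^ 2 - hex_const / 2 * C) + hex_const / 2 * (2 * d * C - 1))
    by (rewrite HM; ring).
  assert (H1 : Rabs (d * (P0 * d ^ 2 - hex_const / 2)) <= 6 * d).
  { rewrite Rabs_mult, Rabs_pos_eq by lra. nra. }
  assert (H2 : Rabs (d * (hex_const / 2)) <= 38 * d).
  { rewrite Rabs_pos_eq by nra. nra. }
  assert (H3 : Rabs (2 * d * (S * d ^ 2 - hex_const / 2 * C)) <= 1200 * d).
  { rewrite Rabs_mult, (Rabs_pos_eq (2 * d)) by lra. nra. }
  assert (H4 : Rabs (hex_const / 2 * (2 * d * C - 1)) <= 152 * d).
  { rewrite Rabs_mult, (Rabs_pos_eq (hex_const / 2)) by lra. nra. }
  set (X1 := d * (P0 * d ^ 2 - hex_const / 2)) in *. set (X2 := d * (hex_const / 2)) in *.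
  set (X3 := 2 * d * (S * d ^ 2 - hex_const / 2 * C)) in *.
  set (X4 := hex_const / 2 * (2 * d * C - 1)) in *.
  pose proof (Rabs_triang (X1 + X2 + X3) X4). pose proof (Rabs_triang (X1 + X2) X3).
  pose proof (Rabs_triang X1 X2). lra.
Qed.

Lemma density_estimate d : 0 < d <= 1 / 100 ->
  Rabs (INR (M4 d) / S4 * (d / 2) ^ 3 - 1 / (4 * sqrt 3)) <= 10 * d.
Proof.
  intros Hd. pose proof PI2_3_2. pose proof sqrt3_bounds as Hr.
  assert (Hpi2 : 144 <= 16 * PI ^ 2) by (simpl; nra).
  replace (INR (M4 d) / S4 * (d / 2) ^ 3 - 1 / (4 * sqrt 3))
    with ((INR (M4 d) * d ^ 3 - hex_const / 2) / (16 * PI ^ 2))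
    by (unfold S4, hex_const; field; lra).
  unfold Rdiv. rewrite Rabs_mult, (Rabs_pos_eq (/ _)) by (apply Rlt_le, Rinv_0_lt_compat; lra).
  apply Rle_div_l; [lra|]. pose proof (M4_estimate d Hd). nra.
Qed.

Lemma filterlim_at_right_0_of_linear_bound (f : R -> R) L C delta : 0 < delta ->
  (forall d, 0 < d <= delta -> Rabs (f d - L) <= C * d) ->
  filterlim f (at_right 0) (locally L).
Proof.
  intros Hdelta Hf. apply filterlim_locally. intros eps.
  pose proof (cond_pos eps) as Heps.
  assert (Hr : 0 < Rmin delta (eps / (Rabs C + 1))).
  { apply Rmin_pos; [lra|]. apply Rdiv_lt_0_compat; [lra|]. pose proof (Rabs_pos C). lra. }
  exists (mkposreal _ Hr). intros y Hy Hpos.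
  change (Rabs (y - 0) < Rmin delta (eps / (Rabs C + 1))) in Hy.
  rewrite Rminus_0_r, Rabs_pos_eq in Hy by lra.
  pose proof (Rmin_l delta (eps / (Rabs C + 1))). pose proof (Rmin_r delta (eps / (Rabs C + 1))).
  assert (Hy' : y * (Rabs C + 1) < eps).
  { apply Rlt_div_r; [pose proof (Rabs_pos C); lra|lra]. }
  change (Rabs (f y - L) < eps).
  pose proof (Hf y ltac:(lra)). pose proof (Rle_abs C). nra.
Qed.

Theorem lemma1 :
  filterlim (fun d : R => INR (M4 d) / S4 * (d / 2) ^ 3) (at_right 0)
    (locally (1 / (4 * sqrt 3))).
Proof.
  apply (filterlim_at_right_0_of_linear_bound _ _ 10 (1 / 100)); [lra|].
  exact density_estimate.
Qed.
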